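(* Let $n\ge2$, let $P$ be a partial $n$-Metric on a set $X$, let $x_o\in X$ and let $f:X\to X$. Suppose there are real numbers $r$ and $0<c<1$ such that for every natural number $i$, $$r\le P(\langle f^{i+1}(x_o)\rangle^n)\quad\text{and}\quad P(\langle f^i(x_o)\rangle^{n-1},f^{i+1}(x_o))\le r+c^i\,\big|P(\langle x_o\rangle^{n-1},f(x_o))\big|$$ (i.e. $f$ is an orbital $c_r$-contraction at $x_o$). Then the orbit $\{f^i(x_o)\}_{i\in\mathbb{N}}$ is a Cauchy sequence (i.e. $f$ is a Cauchy function at $x_o$).
   Context: Notation: $\langle a\rangle^k$ denotes the $k$-tuple $(a,\dots,a)$ inserted into an argument list; $f^0(x_o)=x_o$, $f^{i+1}(x_o)=f(f^i(x_o))$. A partial $n$-Metric on $X$ is a function $P:X^n\to\mathbb{R}$ such that for all $x_1,\dots,x_n,a\in X$: (1) $P(\langle x_1\rangle^n)\le P(\langle x_1\rangle^{n-1},x_2)$; (2) $P$ is invariant under permutations of its arguments; (3) $P(\langle x_1\rangle^{n-1},x_2)=P(\langle x_1\rangle^n)$ and $P(\langle x_2\rangle^{n-1},x_1)=P(\langle x_2\rangle^n)$ iff $x_1=x_2$; (4) $P(x_1,\dots,x_n)\le P(x_1,\dots,x_{n-1},a)+P(\langle a\rangle^{n-1},x_n)-P(\langle a\rangle^n)$. A sequence $\{x_i\}$ is Cauchy if there is $r'\in\mathbb{R}$ (its central distance) such that for every $\epsilon>0$ there is $N$ with $|P(x_{i_1},\dots,x_{i_n})-r'|<\epsilon$ for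 all $i_1,\dots,i_n>N$. *)

From mathcomp Require Import all_boot all_fingroup.
From Stdlib Require Import Reals.
Unset Printing Implicit Defensive.

(* An element of X^n is a function 'I_n -> X (coordinates 0..n-1). *)

Definition ntconst (X : Type) (n : nat) (a : X) : 'I_n -> X := fun _ => a.
Arguments ntconst {X} n a.

Definition ntset_last (X : Type) (n : nat) (x : 'I_n -> X) (a : X) : 'I_n -> X :=
  fun i => if (val i == n.-1)%N then a else x i.
Arguments ntset_last {X n} x a.

Definition ntab (X : Type) (n : nat) (a b : X) : 'I_n -> X :=
  @ntset_last X n (ntconst n a) b.
Arguments ntab {X} n a b.

Open Scope R_scope.

Definition partial_nmetric (X : Type) (n : nat) (P : ('I_n -> X) -> R) : Prop :=
  (forall x1 x2 : X, P (ntconst n x1) <= P (ntab n x1 x2)) /\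
  (forall (x : 'I_n -> X) (s : {perm 'I_n}), P (fun i => x (s i)) = P x) /\
  (forall x1 x2 : X,
      (P (ntab n x1 x2) = P (ntconst n x1) /\ P (ntab n x2 x1) = P (ntconst n x2))
      <-> x1 = x2) /\
  (forall (x : 'I_n -> X) (a : X) (j : 'I_n), val j = n.-1 ->
      P x <= P (@ntset_last X n x a) + P (ntab n a (x j)) - P (ntconst n a)).

Definition nCauchy (X : Type) (n : nat) (P : ('I_n -> X) -> R) (u : nat -> X) : Prop :=
  exists r' : R, forall eps : R, 0 < eps ->
    exists N : nat, forall idx : 'I_n -> nat, (forall k : 'I_n, (N < idx k)%nat) ->
      Rabs (P (fun k => u (idx k)) - r') < eps.
Arguments partial_nmetric {X n} P.
Arguments nCauchy {X n} P u.

(* Put [g i := f^i(x_o)] and [K := |P(<x_o>^{n-1}, f x_o)|]. Since the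
   diagonal values [P(<g i>^n)] are bounded below by [r] and the consecutive
   values [P(<g i>^{n-1}, g (i+1))] above by [r + c^i K], the "excess"
   [P(<g j>^{n-1}, g k) - P(<g j>^n)] telescopes, through the triangle
   inequality, to at most [K c^j / (1 - c)] for [0 < j <= k]. Replacing the
   coordinates of an arbitrary tuple [(g i_1, ..., g i_n)] one at a time, by
   [g (N+1)] from above and by [g (max_k i_k)] from below, changes [P] by at
   most [n] such excesses, so that this tuple lies within [O(c^N)] of [r]:
   the orbit is Cauchy with central distance [r]. *)
From mathcomp Require Import all_boot all_fingroup.
From Stdlib Require Import Reals Lra Psatz FunctionalExtensionality.
Open Scope R_scope.

Lemma pow_le_pow_le1 (c : R) (N j : nat) :
  0 <= c -> c <= 1 -> (N <= j)%nat -> c ^ j <= c ^ N.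
Proof.
move=> c_ge0 c_le1 le_Nj; rewrite -(subnKC le_Nj) pow_add.
have c_pow_le1 : c ^ (j - N) <= 1 by rewrite -(pow1 (j - N)); apply: pow_incr; lra.
have := pow_le c N c_ge0; have := pow_le c (j - N) c_ge0; nra.
Qed.

Lemma pow_mul_lt_eventually (c B eps : R) :
  0 <= c -> c < 1 -> 0 < eps -> exists N : nat, c ^ N * B < eps.
Proof.
move=> c_ge0 c_lt1 eps_gt0.
have Babs_gt0 : 0 < Rabs B + 1 by have := Rabs_pos B; lra.
have [N HN] := pow_lt_1_zero c ltac:(rewrite Rabs_right; lra) (eps / (Rabs B + 1))
  ltac:(apply: Rdiv_lt_0_compat; lra).
exists N; have := HN N (Nat.le_refl N); rewrite Rabs_right; last first.
  by apply: Rle_ge; apply: pow_le.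
move=> /(Rmult_lt_compat_r _ _ _ Babs_gt0).
have -> : eps / (Rabs B + 1) * (Rabs B + 1) = eps by field; lra.
have := pow_le c N c_ge0; have := Rle_abs B; nra.
Qed.

Section PartialNMetric.

Context {X : Type} {n : nat} {P : ('I_n -> X) -> R}.
Hypotheses (n_ge2 : (2 <= n)%nat) (HP : partial_nmetric P).

Definition ntset (y : 'I_n -> X) (j : 'I_n) (a : X) : 'I_n -> X :=
  fun i => if i == j then a else y i.

Definition ntfill (a : X) (y : 'I_n -> X) (t : nat) : 'I_n -> X :=
  fun k => if (k < t)%nat then a else y k.

Lemma ntfill0 a y : ntfill a y 0 = y.
Proof. by apply: functional_extensionality => k; rewrite /ntfill ltn0. Qed.

Lemma ntfill_all a y : ntfill a y n = ntconst n a.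
Proof. by apply: functional_extensionality => k; rewrite /ntfill ltn_ord. Qed.

Lemma ntset_fill a y t (lt_tn : (t < n)%nat) :
  ntset (ntfill a y t) (Ordinal lt_tn) a = ntfill a y t.+1.
Proof.
apply: functional_extensionality => k; rewrite /ntset /ntfill.
case: (k =P Ordinal lt_tn) => [->|/eqP neq_kj]; first by rewrite ltnSn.
have neq_kj_nat : (k == t :> nat) = false by apply/negbTE.
by rewrite [in RHS]ltnS [in RHS]leq_eqVlt neq_kj_nat.
Qed.

Lemma ntset_fillS a y t (lt_tn : (t < n)%nat) :
  ntset (ntfill a y t.+1) (Ordinal lt_tn) (y (Ordinal lt_tn)) = ntfill a y t.
Proof.
apply: functional_extensionality => k; rewrite /ntset /ntfill.
case: (k =P Ordinal lt_tn) => [->|/eqP neq_kj]; first by rewrite ltnn.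
have neq_kj_nat : (k == t :> nat) = false by apply/negbTE.
by rewrite ltnS leq_eqVlt neq_kj_nat.
Qed.

Lemma ntfill_at a y t (lt_tn : (t < n)%nat) :
  ntfill a y t (Ordinal lt_tn) = y (Ordinal lt_tn).
Proof. by rewrite /ntfill ltnn. Qed.

Lemma ntfill_lt a y t (k : 'I_n) : (k < t)%nat -> ntfill a y t k = a.
Proof. by rewrite /ntfill => ->. Qed.

Lemma ntab_diag (a : X) : ntab n a a = ntconst n a.
Proof.
by apply: functional_extensionality => i; rewrite /ntab /ntset_last; case: ifP.
Qed.

Lemma ltn_pred_dim : (n.-1 < n)%nat.
Proof. by rewrite ltn_predL; apply: ltnW. Qed.

Let last_ord : 'I_n := Ordinal ltn_pred_dim.

Lemma pnm_triangle_at (y : 'I_n -> X) (j : 'I_n) (a : X) :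
  P y <= P (ntset y j a) + P (ntab n a (y j)) - P (ntconst n a).
Proof.
have [_ [Pperm [_ Ptri]]] := HP.
pose s := tperm j last_ord.
have := Ptri (fun i => y (s i)) a last_ord erefl.
rewrite /= tpermR Pperm.
have -> : ntset_last (fun i => y (s i)) a = (fun i => ntset y j a (s i)).
  apply: functional_extensionality => i; rewrite /ntset_last /ntset.
  by rewrite -{1}(tpermR j last_ord) (inj_eq perm_inj).
by rewrite Pperm.
Qed.

Lemma pnm_ab_triangle (a b m : X) :
  P (ntab n a b) <= P (ntab n a m) + P (ntab n m b) - P (ntconst n m).
Proof.
have [_ [_ [_ Ptri]]] := HP.
have := Ptri (ntab n a b) m last_ord erefl.
have -> : ntset_last (ntab n a b) m = ntab n a m.
  apply: functional_extensionality => i.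
  by rewrite /ntab /ntset_last; case: (val i == n.-1).
by rewrite /ntab /ntset_last /= eqxx.
Qed.

Lemma pnm_le_const_add (a : X) (y : 'I_n -> X) (E : R) :
  (forall k, P (ntab n a (y k)) - P (ntconst n a) <= E) ->
  P y <= P (ntconst n a) + INR n * E.
Proof.
move=> excess_le; rewrite -(ntfill_all a y).
suff : forall t, (t <= n)%nat -> P y <= P (ntfill a y t) + INR t * E by apply.
elim=> [_|t IH lt_tn]; first by rewrite ntfill0 /=; lra.
rewrite S_INR.
have := pnm_triangle_at (ntfill a y t) (Ordinal lt_tn) a.
rewrite ntset_fill ntfill_at.
have := excess_le (Ordinal lt_tn); have := IH (ltnW lt_tn); lra.
Qed.

Lemma pnm_const_le_add (a : X) (y : 'I_n -> X) (E : R) :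
  (forall k, P (ntab n (y k) a) - P (ntconst n (y k)) <= E) ->
  P (ntconst n a) <= P y + INR n * E.
Proof.
move=> excess_le; rewrite -(ntfill_all a y).
suff : forall t, (t <= n)%nat -> P (ntfill a y t) <= P y + INR t * E by apply.
elim=> [_|t IH lt_tn]; first by rewrite ntfill0 /=; lra.
rewrite S_INR.
have := pnm_triangle_at (ntfill a y t.+1) (Ordinal lt_tn) (y (Ordinal lt_tn)).
rewrite ntset_fillS (@ntfill_lt a y t.+1 (Ordinal lt_tn) (ltnSn t)).
have := excess_le (Ordinal lt_tn); have := IH (ltnW lt_tn); lra.
Qed.

End PartialNMetric.

Section Orbit.

Context {X : Type} {n : nat} {P : ('I_n -> X) -> R} {x0 : X} {f : X -> X}.
Context {r c K : R}.
Hypotheses (n_ge2 : (2 <= n)%nat) (HP : partial_nmetric P).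
Hypotheses (c_gt0 : 0 < c) (c_lt1 : c < 1) (K_ge0 : 0 <= K).
Hypothesis orbit_const_ge : forall i, r <= P (ntconst n (iter i.+1 f x0)).
Hypothesis orbit_step_le :
  forall i, P (ntab n (iter i f x0) (iter i.+1 f x0)) <= r + c ^ i * K.

Let g i := iter i f x0.

Lemma orbit_step_excess i : (0 < i)%nat ->
  P (ntab n (g i) (g i.+1)) - P (ntconst n (g i)) <= c ^ i * K.
Proof.
case: i => // i _; rewrite /g.
by have := orbit_const_ge i; have := orbit_step_le i.+1; lra.
Qed.

Lemma orbit_excess_geom j d : (0 < j)%nat ->
  P (ntab n (g j) (g (j + d))) - P (ntconst n (g j))
    <= K * (c ^ j - c ^ (j + d)) / (1 - c).
Proof.
move=> j_gt0; elim: d => [|d IH].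
  by rewrite addn0 ntab_diag !Rminus_diag Rmult_0_r /Rdiv Rmult_0_l; lra.
have := pnm_ab_triangle n_ge2 HP (g j) (g (j + d.+1)) (g (j + d)).
have := orbit_step_excess (j + d) (leq_trans j_gt0 (leq_addr d j)).
have -> : K * (c ^ j - c ^ (j + d.+1)) / (1 - c)
          = K * (c ^ j - c ^ (j + d)) / (1 - c) + c ^ (j + d) * K.
  by rewrite addnS /=; field; lra.
rewrite addnS; lra.
Qed.

Lemma orbit_excess_le j k : (0 < j)%nat -> (j <= k)%nat ->
  P (ntab n (g j) (g k)) - P (ntconst n (g j)) <= K * c ^ j / (1 - c).
Proof.
move=> j_gt0 /subnKC <-; apply: Rle_trans (orbit_excess_geom _ _ j_gt0) _.
apply: Rmult_le_compat_r; first by apply: Rlt_le; apply: Rinv_0_lt_compat; lra.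
by apply: Rmult_le_compat_l => //; have := pow_le c (j + (k - j)) (Rlt_le _ _ c_gt0); lra.
Qed.

Lemma orbit_nCauchy : nCauchy P g.
Proof.
have one_sub_c_gt0 : 0 < 1 - c by lra.
exists r => eps eps_gt0.
have [N cN_lt] := @pow_mul_lt_eventually c (K * (1 + INR n / (1 - c))) eps
                    (Rlt_le _ _ c_gt0) c_lt1 eps_gt0.
set E := K * c ^ N / (1 - c).
have cN_split : c ^ N * (K * (1 + INR n / (1 - c))) = c ^ N * K + INR n * E.
  by rewrite /E; field; lra.
have cN_ge_pow j : (N <= j)%nat -> c ^ j <= c ^ N.
  by apply: pow_le_pow_le1; lra.
have excess_le j k : (N < j)%nat -> (j <= k)%nat ->
    P (ntab n (g j) (g k)) - P (ntconst n (g j)) <= E.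
  move=> lt_Nj le_jk.
  apply: Rle_trans (orbit_excess_le j k (leq_ltn_trans (leq0n N) lt_Nj) le_jk) _.
  apply: Rmult_le_compat_r; first by apply: Rlt_le; apply: Rinv_0_lt_compat.
  by apply: Rmult_le_compat_l => //; apply: cN_ge_pow; apply: ltnW.
exists N => idx idx_gt.
pose M := (\max_k idx k)%nat.
have idx_le k : (idx k <= M)%nat by apply: leq_bigmax.
have upper := pnm_le_const_add n_ge2 HP (g N.+1) (fun k => g (idx k)) E
                (fun k => excess_le _ _ (ltnSn N) (idx_gt k)).
have lower := pnm_const_le_add n_ge2 HP (g M) (fun k => g (idx k)) E
                (fun k => excess_le _ _ (idx_gt k) (idx_le k)).
have M_gt0 : (0 < M)%nat.
  have k0 : 'I_n := Ordinal (ltnW n_ge2).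
  exact: leq_trans (leq_ltn_trans (leq0n N) (idx_gt k0)) (idx_le k0).
have r_le_constM : r <= P (ntconst n (g M)).
  by rewrite /g -(prednK M_gt0); apply: orbit_const_ge.
have constN_le : P (ntconst n (g N.+1)) <= r + c ^ N * K.
  have [ab_ge _] := HP.
  apply: Rle_trans (ab_ge _ (g N.+2)) _; apply: Rle_trans (orbit_step_le N.+1) _.
  by apply: Rplus_le_compat_l; apply: Rmult_le_compat_r => //; apply: cN_ge_pow.
have E_ge0 : 0 <= E.
  apply: Rmult_le_pos; last by apply: Rlt_le; apply: Rinv_0_lt_compat.
  by apply: Rmult_le_pos => //; apply: pow_le; lra.
have n_ge0 := pos_INR n; have cN_ge0 := pow_le c N (Rlt_le _ _ c_gt0).
by apply: Rabs_def1; nra.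
Qed.

End Orbit.

Theorem lemma5p11 (X : Type) (n : nat) (P : ('I_n -> X) -> R)
  (x0 : X) (f : X -> X) (r c : R) :
  (2 <= n)%nat ->
  partial_nmetric P ->
  0 < c -> c < 1 ->
  (forall i : nat,
      r <= P (ntconst n (iter i.+1 f x0)) /\
      P (ntab n (iter i f x0) (iter i.+1 f x0))
        <= r + c ^ i * Rabs (P (ntab n x0 (f x0)))) ->
  nCauchy P (fun i => iter i f x0).
Proof.
move=> n_ge2 HP c_gt0 c_lt1 contraction.
apply: (orbit_nCauchy (r := r) n_ge2 HP c_gt0 c_lt1 (Rabs_pos (P (ntab n x0 (f x0))))).
- by move=> i; have [] := contraction i.
- by move=> i; have [] := contraction i.
Qed.
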